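(* Let $a>0$, $a_N=a\ln N/N$, and for each $N$ let $P_{N,a_N}$ be the probability on sequences $(n_j)_{j\ge0}$ of nonnegative integers with $\sum_jn_j=N$ given by $P_{N,a_N}((n_j))\propto e^{-a_N\sum_jjn_j}$, with $\langle n_0\rangle_{N,a_N}$ the expectation of $n_0$. Then the critical value is $a_c=1$: for $a<1$, $\frac1N\langle n_0\rangle_{N,a_N}\to0$ (no BEC). For $a>1$ and $\lambda_N=1-m_N/N$ (integers $0\le m_N\le N$) with $0<\lim\lambda_N<1-a^{-1}$, $\lim_{N\to\infty}P_{N,a_N}(n_0/N\ge\lambda_N)=1$; moreover $\lim_{N\to\infty}\frac1N\langle n_0\rangle_{N,a_N}\ge1-\frac1a$.
   Context: This is the canonical ensemble of $N$ noninteracting bosons in a one-dimensional harmonic trap of scaled frequency $\omega\ln N/N$, with $a=\hbar\omega\beta$. *)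

From HB Require Import structures.
From mathcomp Require Import all_boot all_order all_algebra.
From mathcomp Require Import all_classical all_reals all_analysis.
Set Implicit Arguments. Unset Strict Implicit. Unset Printing Implicit Defensive.
Import Order.TTheory GRing.Theory Num.Theory.
Local Open Scope classical_set_scope.
Local Open Scope ring_scope.

(* Canonical ensemble of N noninteracting bosons in a 1D harmonic trap.
   A configuration is an occupation sequence n : nat -> nat, n j = number of
   particles in level j. *)

Definition occ_total (R : realType) (n : nat -> nat) : \bar R :=
  \esum_(j in [set: nat]) ((n j)%:R)%:E.

Definition energy (R : realType) (n : nat -> nat) : \bar R :=
  \esum_(j in [set: nat]) ((j * n j)%:R)%:E.

Definition Omega (R : realType) (N : nat) : set (nat -> nat) :=
  [set n | occ_total R n = (N%:R)%:E].

Definition bweight (R : realType) (b : R) (n : nat -> nat) : \bar R :=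
  expeR (- (b%:E * energy R n))%E.

Definition Zpart (R : realType) (N : nat) (b : R) : \bar R :=
  \esum_(n in Omega R N) bweight b n.

Definition Prob (R : realType) (N : nat) (b : R) (A : set (nat -> nat)) : R :=
  fine (\esum_(n in Omega R N `&` A) bweight b n) / fine (Zpart N b).

Definition mean_n0 (R : realType) (N : nat) (b : R) : R :=
  fine (\esum_(n in Omega R N) ((n 0%N)%:R%:E * bweight b n)%E) / fine (Zpart N b).

Definition aN (R : realType) (a : R) (N : nat) : R := a * ln (N%:R) / N%:R.

(* Write q = exp (- b). Removing one particle from the lowest occupied level s
   and lowering all levels by s is a bijection from Omega_(M+1) onto
   nat * Omega_M (its inverse is [raise]) that divides the Boltzmann weight by
   q^(s(M+1)); summing the geometric series in s gives
   Z_N = prod_(1 <= i <= N) (1 - q^i)^-1.  Putting k extra particles into the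
   ground level is a weight-preserving bijection from Omega_(N-k) onto
   {n in Omega_N | n_0 >= k}, hence
       P(n_0 >= k) = prod_(N-k < i <= N) (1 - q^i),
   and Bernoulli's inequality brackets this product:
       1 - k q^(N-k) <= P(n_0 >= k) <= 1 / (1 + k q^N).
   For b = a_N we have q^j = N^(-a j / N).  If a < 1 then k q^N -> oo for
   k = eps N, so P(n_0 >= eps N) -> 0; if a (N - k) >= c N with c > 1 then
   N q^(N-k) <= N^(1-c) -> 0, so P(n_0 >= k) -> 1.  The Markov-type bounds
   k P(n_0 >= k) <= <n_0> <= k + N P(n_0 >= k) carry this over to the mean. *)

From HB Require Import structures.
From mathcomp Require Import all_boot all_order all_algebra.
From mathcomp Require Import all_classical all_reals all_analysis.
From mathcomp Require Import ring lra.
Import Order.TTheory GRing.Theory Num.Theory.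
Local Open Scope classical_set_scope.
Local Open Scope ring_scope.

Section ExtendedSums.
Variables (R : realType) (T : choiceType).
Local Open Scope ereal_scope.

Lemma ge0_esumZl (I : set T) (c : R) (f : T -> \bar R) :
  (0 <= c)%R -> (forall x, 0 <= f x) ->
  \esum_(i in I) (c%:E * f i) = c%:E * \esum_(i in I) f i.
Proof.
have esumZ_le (d : R) (g : T -> \bar R) : (0 <= d)%R -> (forall x, 0 <= g x) ->
    \esum_(i in I) (d%:E * g i) <= d%:E * \esum_(i in I) g i.
  move=> d0 g0; apply: ge_ereal_sup => _ [X [finX XI] <-].
  rewrite -ge0_mule_fsumr //; apply: lee_wpmul2l; first by rewrite lee_fin.
  by apply: esum_ge; exists X.
move=> c0 f0; have [->|c_neq0] := eqVneq c 0%R.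
  by rewrite mul0e esum1 // => i _; rewrite mul0e.
apply/eqP; rewrite eq_le esumZ_le //=.
have -> : \esum_(i in I) f i = \esum_(i in I) ((c^-1)%R%:E * (c%:E * f i)).
  by apply: eq_esum => i _; rewrite muleA -EFinM mulVf // mul1e.
rewrite (le_trans (lee_wpmul2l _ (esumZ_le (c^-1)%R _ _ _))) //.
- by rewrite invr_ge0.
- by move=> x; rewrite mule_ge0 // lee_fin.
- by rewrite muleA -EFinM mulfV // mul1e.
Qed.

End ExtendedSums.

Section Occupations.
Variable R : realType.
Local Open Scope ereal_scope.

Definition nsum (f : nat -> nat) : \bar R := \esum_(j in [set: nat]) (f j)%:R%:E.

Lemma occ_totalE n : occ_total R n = nsum n. Proof. by []. Qed.

Lemma energyE n : energy R n = nsum (fun j => j * n j)%N. Proof. by []. Qed.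

Lemma nsum_ge0 f : 0 <= nsum f.
Proof. by apply: esum_ge0 => j _; rewrite lee_fin. Qed.

Lemma nsumD f g : nsum (fun j => f j + g j)%N = nsum f + nsum g.
Proof.
rewrite /nsum -esumD => [|j _|j _]; rewrite ?lee_fin //.
by apply: eq_esum => j _; rewrite natrD EFinD.
Qed.

Lemma nsumZ c f : nsum (fun j => c * f j)%N = c%:R%:E * nsum f.
Proof.
rewrite /nsum -ge0_esumZl => [|//|j]; rewrite ?lee_fin //.
by apply: eq_esum => j _; rewrite natrM EFinM.
Qed.

Lemma nsum_delta s c : nsum (fun j => if j == s then c else 0)%N = c%:R%:E.
Proof.
rewrite /nsum -(@esum_set1 _ _ s (fun=> c%:R%:E)) ?lee_fin // [RHS]esum_mkcond.
by apply: eq_esum => j _; rewrite in_set1; case: eqP.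
Qed.

Lemma nsum_shift s f : nsum (fun j => if s <= j then f (j - s) else 0)%N = nsum f.
Proof.
rewrite /nsum (_ : \esum_(j in _) _ =
    \esum_(j in [set j | s <= j]%N) (f (j - s)%N)%:R%:E); last first.
  rewrite [RHS]esum_mkcond; apply: eq_esum => j _.
  by case: ifPn => sj; [rewrite mem_set | rewrite memNset //; exact/negP].
rewrite (reindex_esum [set: nat] _ (fun i => i + s)%N).
  by apply: eq_esum => i _; rewrite addnK.
split=> [i _ /=|i j _ _ /addIn //|j /= sj]; first by rewrite leq_addl.
by exists (j - s)%N; rewrite ?subnK.
Qed.

Lemma le_nsum f j : (f j)%:R%:E <= nsum f.
Proof.
apply: esum_ge; exists [set j]; first by split => //; exact: finite_set1.
by rewrite fsbig_set1.
Qed.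

Lemma nsum0 f : (forall j, f j = 0%N) -> nsum f = 0.
Proof. by move=> f0; rewrite /nsum esum1 // => j _; rewrite f0. Qed.

Lemma nsum_eq0 f j : nsum f = 0 -> f j = 0%N.
Proof. by move=> f0; have := le_nsum f j; rewrite f0 lee_fin lern0 => /eqP. Qed.

Lemma Omega_addn M k n : occ_total R n + k%:R%:E = (M + k)%:R%:E -> Omega R M n.
Proof.
move=> h; rewrite /Omega /= -[occ_total R n](addeK (x := k%:R%:E)) // h.
by rewrite -EFinB natrD addrK.
Qed.

Lemma Omega0 : Omega R 0 = [set fun=> 0%N].
Proof.
apply/seteqP; split => n /=.
  by rewrite /Omega /= occ_totalE => n0; apply: funext => j; exact: nsum_eq0 n0.
by move=> ->; rewrite /Omega /= occ_totalE nsum0.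
Qed.

Definition raise (s : nat) (n : nat -> nat) : nat -> nat :=
  fun j => ((if s <= j then n (j - s) else 0) + (if j == s then 1 else 0))%N.

Lemma occ_total_raise s n : occ_total R (raise s n) = occ_total R n + 1.
Proof. by rewrite !occ_totalE nsumD nsum_shift nsum_delta. Qed.

Lemma energy_raise s n :
  energy R (raise s n) = energy R n + s%:R%:E * occ_total R n + s%:R%:E.
Proof.
rewrite !energyE occ_totalE; pose g i := (i * n i + s * n i)%N.
have -> : (fun j => j * raise s n j)%N =
    (fun j => (if s <= j then g (j - s) else 0) + (if j == s then s else 0))%N.
  apply: funext => j; rewrite /raise /g mulnDr; congr (_ + _)%N.
    by case: ifP => sj //=; rewrite ?muln0 // -mulnDl subnK.
  by case: eqP => [->|]; rewrite ?muln1 ?muln0.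
by rewrite nsumD (nsum_shift s g) nsum_delta nsumD nsumZ.
Qed.

Lemma raise_neq0 s n j : raise s n j != 0%N -> (s <= j)%N.
Proof.
rewrite /raise; case: leqP => // sj; case: (j =P s) => [e|] //.
by rewrite e ltnn in sj.
Qed.

Lemma raise_at s n : raise s n s != 0%N.
Proof. by rewrite /raise leqnn eqxx addn1. Qed.

Lemma raise_addn s n j : raise s n (j + s) = (n j + (j == 0%N))%N.
Proof. by rewrite /raise leq_addl addnK -{2}(add0n s) eqn_add2r; case: eqP. Qed.

Lemma raise_inj s s' n n' : raise s n = raise s' n' -> s = s' /\ n = n'.
Proof.
move=> e; have ss' : s = s'.
  apply/eqP; rewrite eqn_leq (@raise_neq0 s n s') ?(@raise_neq0 s' n' s) //.
    by rewrite -e raise_at.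
  by rewrite e raise_at.
subst s'; split => //; apply: funext => j.
have := congr1 (fun f => f (j + s)%N) e; cbv beta.
by rewrite !raise_addn => /addIn.
Qed.

Lemma raise_surj n j0 : n j0 != 0%N -> exists s n', raise s n' = n.
Proof.
move=> nj0; have exj : exists j, n j != 0%N by exists j0.
case: (ex_minnP exj) => s ns smin.
exists s, (fun j => n (j + s) - (j == 0%N))%N; apply: funext => i; rewrite /raise.
case: (leqP s i) => [si|ltis]; last first.
  rewrite add0n (ltn_eqF ltis); apply/eqP; rewrite eq_sym.
  by apply: contraTT ltis => /smin; rewrite -leqNgt.
rewrite subnK //; case: (i =P s) => [->|ne].
  by rewrite subnn eqxx subn1 addn1 prednK // lt0n.
suff -> : (i - s == 0)%N = false by rewrite !subn0 addn0.
by rewrite subn_eq0; apply: contra_notF ne => is0; apply/eqP; rewrite eqn_leq is0.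
Qed.

Lemma raise_bij M : set_bij ([set: nat] `*`` (fun=> Omega R M)) (Omega R M.+1)
  (fun p => raise p.1 p.2).
Proof.
split.
- move=> [s n] [_ /= nM]; rewrite /Omega /= occ_total_raise nM.
  by rewrite -EFinD -natr1.
- by move=> [s n] [s' n'] _ _ /= /raise_inj [-> ->].
move=> n nM; have [j nj] : exists j, n j != 0%N.
  apply: contrapT => /forallNP n0; move: nM; rewrite /Omega /= occ_totalE nsum0.
    by move=> /eqP; rewrite eqe eq_sym pnatr_eq0.
  by move=> j; apply/eqP/negbNE/negP/n0.
have [s [n' def_n]] := @raise_surj n j nj; subst n.
exists (s, n') => //; split => //=; apply: (@Omega_addn M 1%N).
by move: nM; rewrite /Omega /= occ_total_raise addn1.
Qed.

Definition fill_ground (k : nat) (n : nat -> nat) : nat -> nat :=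
  fun j => (n j + (if j == 0%N then k else 0))%N.

Lemma occ_total_fill_ground k n :
  occ_total R (fill_ground k n) = occ_total R n + k%:R%:E.
Proof. by rewrite !occ_totalE nsumD nsum_delta. Qed.

Lemma energy_fill_ground k n : energy R (fill_ground k n) = energy R n.
Proof.
rewrite !energyE /fill_ground; congr nsum; apply: funext => j.
by case: eqP => [->|]; rewrite ?mul0n ?addn0.
Qed.

Lemma fill_ground_bij M k : set_bij (Omega R M)
  (Omega R (M + k) `&` [set n | (k <= n 0%N)%N]) (fill_ground k).
Proof.
split.
- move=> n nM; split; last by rewrite /= /fill_ground leq_addl.
  by rewrite /Omega /= occ_total_fill_ground nM -EFinD natrD.
- move=> n n' _ _ e; apply: funext => j.
  by have /addIn := congr1 (fun f => f j) e.
move=> n [nM kn]; pose n' j := (n j - (if j == 0%N then k else 0))%N.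
have fill_n' : fill_ground k n' = n.
  apply: funext => j; rewrite /fill_ground /n'; case: eqP => [->|_].
    by rewrite subnK.
  by rewrite !subn0 addn0.
exists n' => //; apply: (@Omega_addn M k).
by rewrite -occ_total_fill_ground fill_n'.
Qed.

End Occupations.

Lemma esum_geometric (R : realType) (z r : R) : 0 <= z -> 0 <= r < 1 ->
  (\esum_(s in [set: nat]) (z * r ^+ s)%:E = (z / (1 - r))%:E)%E.
Proof.
move=> z0 /andP[r0 r1].
rewrite -nneseries_esumT; last by move=> n; rewrite lee_fin mulr_ge0 // exprn_ge0.
have r_lt1 : `|r| < 1 by rewrite ger0_norm.
rewrite (_ : (fun n => \sum_(0 <= i < n) (z * r ^+ i)%:E)%E =
    EFin \o series (geometric z r)); last first.
  by apply: funext => n; rewrite /series /= sumEFin.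
rewrite EFin_lim; last exact: is_cvg_geometric_series.
have /(@cvg_unique _ (@Rhausdorff R)) := @cvg_geometric_series _ z _ r_lt1.
by move/(_ _ (@is_cvg_geometric_series _ z _ r_lt1)) => ->.
Qed.

Definition qpoch {R : ringType} (q : R) (M : nat) : R := \prod_(i < M) (1 - q ^+ i.+1).

Definition qtail {R : ringType} (q : R) (N k : nat) : R :=
  \prod_((N - k)%N <= i < N) (1 - q ^+ i.+1).

Lemma qpoch_gt0 (R : realFieldType) (q : R) M : 0 <= q < 1 -> 0 < qpoch q M.
Proof.
move=> /andP[q0 q1]; apply: prodr_gt0 => i _.
by rewrite subr_gt0 exprn_ilt1.
Qed.

Lemma qpoch_ratio (R : realFieldType) (q : R) {N k} : 0 <= q < 1 -> (k <= N)%N ->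
  qpoch q N / qpoch q (N - k) = qtail q N k.
Proof.
move=> q01 kN; rewrite /qpoch /qtail -!(big_mkord xpredT (fun i => 1 - q ^+ i.+1)).
rewrite (big_cat_nat (leq0n (N - k)) (leq_subr k N)) /= mulrAC mulfV ?mul1r //.
by rewrite big_mkord gt_eqF // qpoch_gt0.
Qed.

Section Partition.
Context {R : realType} {b : R}.
Hypothesis b_gt0 : 0 < b.
Local Notation q := (expR (- b)).

Lemma expRN_itv : 0 <= q < 1.
Proof. by rewrite expR_ge0 expR_lt1 oppr_lt0. Qed.

Local Open Scope ereal_scope.

Lemma bweight_ge0 n : 0 <= bweight b n.
Proof. exact: expeR_ge0. Qed.

Lemma bweight_raise M s n : Omega R M n ->
  bweight b (raise s n) = bweight b n * (q ^+ (s * M.+1))%:E.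
Proof.
move=> nM; rewrite /bweight energy_raise nM -EFinM -natrM -addeA -EFinD -natrD.
rewrite [(s * M + s)%N]addnC -mulnS ge0_muleDr ?lee_fin ?energyE ?nsum_ge0 //.
rewrite oppeD ?fin_num_adde_defl // expeRD; congr (_ * _).
by rewrite -EFinM -EFinN /= -expRM_natr mulNr.
Qed.

Lemma Zpart_qpoch M : Zpart M b = ((qpoch q M)^-1)%:E.
Proof.
elim: M => [|M IH].
  rewrite /Zpart (Omega0 R) esum_set1 ?bweight_ge0 // /bweight energyE.
  rewrite nsum0 => [|j]; last exact: muln0.
  by rewrite mule0 oppe0 expeR0 /qpoch big_ord0 invr1.
rewrite /Zpart (reindex_esum _ _ _ _ (raise_bij R M)).
rewrite -(esum_esum (a := fun s n => bweight b (raise s n))); last first.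
  by move=> *; exact: bweight_ge0.
pose r := (q ^+ M.+1)%R.
have r01 : (0 <= r < 1)%R.
  by case/andP: expRN_itv => q0 q1; rewrite exprn_ge0 ?exprn_ilt1.
transitivity (\esum_(s in [set: nat]) ((qpoch q M)^-1 * r ^+ s)%:E).
  apply: eq_esum => s _; rewrite mulrC EFinM -IH -ge0_esumZl; last first.
  - exact: bweight_ge0.
  - by rewrite exprn_ge0 //; case/andP: r01.
  apply: eq_esum => n nM; rewrite (@bweight_raise M s n nM) muleC.
  by rewrite -exprM mulnC.
rewrite esum_geometric //; last by rewrite invr_ge0 ltW // qpoch_gt0 ?expRN_itv.
by rewrite /qpoch big_ord_recr /= invfM.
Qed.

Lemma esum_bweight_n0_ge {N k} : (k <= N)%N ->
  \esum_(n in Omega R N `&` [set n | (k <= n 0%N)%N]) bweight b n =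
  ((qpoch q (N - k))^-1)%:E.
Proof.
move=> kN; have := fill_ground_bij R (N - k) k; rewrite subnK // => fill_bij.
rewrite (reindex_esum _ _ _ _ fill_bij) -Zpart_qpoch.
by apply: eq_esum => n _; rewrite /bweight energy_fill_ground.
Qed.

Lemma Prob_n0_ge {N k} : (k <= N)%N ->
  Prob N b [set n | (k <= n 0%N)%N] = qtail q N k.
Proof.
move=> kN; rewrite /Prob esum_bweight_n0_ge // Zpart_qpoch //= invrK mulrC.
by rewrite qpoch_ratio ?expRN_itv.
Qed.

Lemma n0_moment_ge N k :
  (k%:R%:E * \esum_(n in Omega R N `&` [set n | (k <= n 0%N)%N]) bweight b n) <=
  \esum_(n in Omega R N) ((n 0%N)%:R%:E * bweight b n).
Proof.
rewrite esum_mkcondr -ge0_esumZl //; last by move=> n; case: ifP; rewrite ?bweight_ge0.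
apply: le_esum => n _; case: ifPn => [/set_mem kn|_]; last first.
  by rewrite mule0 mule_ge0 ?bweight_ge0 // lee_fin.
by rewrite lee_wpmul2r ?bweight_ge0 // lee_fin ler_nat.
Qed.

Lemma n0_moment_le N k :
  \esum_(n in Omega R N) ((n 0%N)%:R%:E * bweight b n) <=
  k%:R%:E * Zpart N b +
  N%:R%:E * \esum_(n in Omega R N `&` [set n | (k <= n 0%N)%N]) bweight b n.
Proof.
rewrite /Zpart esum_mkcondr.
rewrite -[X in _ <= X + _]ge0_esumZl //; last exact: bweight_ge0.
rewrite -[X in _ <= _ + X]ge0_esumZl //; last first.
  by move=> n; case: ifP; rewrite ?bweight_ge0.
rewrite -esumD => [|n _|n _]; rewrite ?mule_ge0 ?lee_fin ?bweight_ge0 //; last first.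
  by case: ifP; rewrite ?bweight_ge0.
apply: le_esum => n nN; case: ifPn => [_|/negP kn]; last first.
  rewrite mule0 adde0 lee_wpmul2r ?bweight_ge0 // lee_fin ler_nat ltnW //.
  by rewrite ltnNge; apply/negP => /mem_set.
apply: (le_trans _ (leeDr _ _)); last by rewrite mule_ge0 ?bweight_ge0 // lee_fin.
by rewrite lee_wpmul2r ?bweight_ge0 // -nN le_nsum.
Qed.

Lemma n0_moment_fin N :
  \esum_(n in Omega R N) ((n 0%N)%:R%:E * bweight b n) \is a fin_num.
Proof.
rewrite ge0_fin_numE; last first.
  by rewrite esum_ge0 // => n _; rewrite mule_ge0 ?bweight_ge0.
apply: le_lt_trans (n0_moment_le N 0) _.
by rewrite Zpart_qpoch esum_bweight_n0_ge // -!EFinM -EFinD ltry.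
Qed.

Local Close Scope ereal_scope.

Lemma mean_n0_ge {N k} : (k <= N)%N ->
  k%:R * Prob N b [set n | (k <= n 0%N)%N] <= mean_n0 N b.
Proof.
move=> kN; have := n0_moment_ge N k.
rewrite esum_bweight_n0_ge // -EFinM -(fineK (n0_moment_fin N)) lee_fin => moment_ge.
rewrite /mean_n0 /Prob esum_bweight_n0_ge // mulrA ler_wpM2r //.
by rewrite Zpart_qpoch /= invr_ge0 invr_ge0 ltW ?qpoch_gt0 ?expRN_itv.
Qed.

Lemma mean_n0_le {N k} : (k <= N)%N ->
  mean_n0 N b <= k%:R + N%:R * Prob N b [set n | (k <= n 0%N)%N].
Proof.
move=> kN; have := n0_moment_le N k.
rewrite esum_bweight_n0_ge // Zpart_qpoch -!EFinM -EFinD -(fineK (n0_moment_fin N)).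
rewrite lee_fin => moment_le.
have Z_gt0 : 0 < (qpoch q N)^-1 by rewrite invr_gt0 qpoch_gt0 ?expRN_itv.
rewrite /mean_n0 /Prob esum_bweight_n0_ge // Zpart_qpoch /= ler_pdivrMr // mulrDl.
by rewrite -mulrA divfK ?gt_eqF.
Qed.

Lemma mean_n0_ge0 N : 0 <= mean_n0 N b.
Proof. by have := mean_n0_ge (leq0n N); rewrite mul0r. Qed.

End Partition.

Lemma bernoulli_ineq {R : realDomainType} (y : R) k :
  -1 <= y -> 1 + k%:R * y <= (1 + y) ^+ k.
Proof.
move=> y_ge; elim: k => [|k IHk]; first by rewrite mul0r addr0 expr0.
have y1_ge0 : 0 <= 1 + y by lra.
rewrite exprS -natr1 (le_trans _ (ler_wpM2l y1_ge0 IHk)) //.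
have : 0 <= k%:R * y ^+ 2 by rewrite mulr_ge0 ?sqr_ge0.
by rewrite expr2; nra.
Qed.

Section QTail.
Context {R : realFieldType} {q : R}.
Hypotheses (q_ge0 : 0 <= q) (q_le1 : q <= 1).

Lemma expr_q01 n : 0 <= q ^+ n <= 1.
Proof. by rewrite exprn_ge0 ?exprn_ile1. Qed.

Lemma qtail_le1 N k : qtail q N k <= 1.
Proof.
apply: prodr_ile1 => i _; have /andP[qi0 qi1] := expr_q01 i.+1.
by rewrite subr_ge0 qi1 lerBlDr lerDl qi0.
Qed.

Lemma qtail_ge {N k} : (k <= N)%N -> 1 - k%:R * q ^+ (N - k) <= qtail q N k.
Proof.
move=> kN; have /andP[qNk0 qNk1] := expr_q01 (N - k).
apply: le_trans (_ : \prod_((N - k)%N <= i < N) (1 - q ^+ (N - k)) <= _).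
  by rewrite prodr_const_nat subKn // -mulrN bernoulli_ineq // lerNl opprK.
rewrite /qtail big_nat_cond [X in _ <= X]big_nat_cond.
apply: ler_prod => i /andP[/andP[Nki _] _].
by rewrite subr_ge0 qNk1 lerB // ler_wiXn2l // leqW.
Qed.

Lemma qtail_mul_le1 {N k} : (k <= N)%N -> qtail q N k * (1 + k%:R * q ^+ N) <= 1.
Proof.
move=> kN; have /andP[qN0 qN1] := expr_q01 N.
have tail_le : qtail q N k <= \prod_((N - k)%N <= i < N) (1 - q ^+ N).
  rewrite /qtail big_nat_cond [X in _ <= X]big_nat_cond.
  apply: ler_prod => i /andP[/andP[_ iN] _]; have /andP[_ qi1] := expr_q01 i.+1.
  by rewrite subr_ge0 qi1 lerB // ler_wiXn2l.
rewrite prodr_const_nat subKn // in tail_le.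
have bern_le := bernoulli_ineq (q ^+ N) k (le_trans (lerN10 R) qN0).
apply: le_trans (_ : (1 - q ^+ N) ^+ k * (1 + q ^+ N) ^+ k <= 1).
  apply: ler_pM => //; last by rewrite addr_ge0 // mulr_ge0.
  apply: prodr_ge0 => i _; have /andP[_ qi1] := expr_q01 i.+1.
  by rewrite subr_ge0.
rewrite -exprMn exprn_ile1 //; nra.
Qed.

End QTail.

Section Asymptotics.
Context {R : realType}.
Implicit Types a c e C : R.

Lemma aN_gt0 {a N} : 0 < a -> (1 < N)%N -> 0 < aN a N.
Proof.
move=> a0 N2; rewrite /aN divr_gt0 ?mulr_gt0 ?ln_gt0 ?ltr1n ?ltr0n //.
exact: ltnW.
Qed.

Lemma expR_aN_natr a N j :
  expR (- aN a N) ^+ j = expR (- (a * j%:R / N%:R * ln N%:R)).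
Proof. by rewrite -expRM_natr /aN; congr expR; ring. Qed.

Lemma ln_natr_ge C : \forall N \near \oo, C <= ln (N%:R : R).
Proof.
near=> N; have N_ge : expR C <= N%:R by near: N; exact: nbhs_infty_ger.
by rewrite -[C]expRK ler_ln ?posrE ?expR_gt0 // (lt_le_trans (expR_gt0 C)).
Unshelve. all: by end_near.
Qed.

(* With [q = exp (- a_N)], [N q^N = N^(1 - a) >= 1 + (1 - a) ln N]. *)
Lemma natr_mul_expR_aN_ge a C : a < 1 ->
  \forall N \near \oo, C <= N%:R * expR (- aN a N) ^+ N.
Proof.
move=> a1; near=> N.
have N_gt0 : (0 < N)%N by near: N; exact: nbhs_infty_gt.
have lnN_ge : C / (1 - a) <= ln (N%:R : R) by near: N; exact: ln_natr_ge.
rewrite expR_aN_natr mulfK ?pnatr_eq0 -?lt0n //.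
rewrite -[X in X * _]lnK ?posrE ?ltr0n // -expRD (le_trans _ (expR_ge1Dx _)) //.
by move: lnN_ge; rewrite ler_pdivrMr ?subr_gt0 //; lra.
Unshelve. all: by end_near.
Qed.

Lemma natr_mul_expR_aN_le a c e : 0 < a -> 1 < c -> 0 < e ->
  \forall N \near \oo, forall j : nat, c * N%:R <= a * j%:R ->
    N%:R * expR (- aN a N) ^+ j <= e.
Proof.
move=> a0 c1 e0; near=> N => j cN_le.
have N_gt1 : (1 < N)%N by near: N; exact: nbhs_infty_gt.
have lnN_ge : - ln e / (c - 1) <= ln (N%:R : R) by near: N; exact: ln_natr_ge.
have N_gt0 : 0 < (N%:R : R) by rewrite ltr0n ltnW.
have lnN_gt0 : 0 < ln (N%:R : R) by rewrite ln_gt0 // ltr1n.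
have c_le : c <= a * j%:R / N%:R by rewrite ler_pdivlMr.
rewrite expR_aN_natr -[X in X * _]lnK ?posrE // -expRD -[e]lnK ?posrE //.
rewrite ler_expR; move: lnN_ge; rewrite ler_pdivrMr ?subr_gt0 // => lnN_ge.
have : c * ln (N%:R : R) <= a * j%:R / N%:R * ln (N%:R : R) by rewrite ler_wpM2r // ltW.
lra.
Unshelve. all: by end_near.
Qed.

End Asymptotics.

Section BoseEinsteinCondensation.
Context {R : realType}.
Implicit Types a c e : R.

Lemma mean_n0_div_le {b : R} {N k} : 0 < b -> (0 < N)%N -> (k <= N)%N ->
  mean_n0 N b / N%:R <= k%:R / N%:R + (1 + k%:R * expR (- b) ^+ N)^-1.
Proof.
move=> b0 N0 kN; have /andP[q0 q1] := expRN_itv b0.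
have Ppos : 0 < 1 + k%:R * expR (- b) ^+ N by rewrite ltr_wpDr ?mulr_ge0 ?exprn_ge0.
rewrite ler_pdivrMr ?ltr0n // mulrDl divfK ?pnatr_eq0 -?lt0n //.
apply: le_trans (mean_n0_le b0 kN) _; rewrite lerD2l mulrC ler_wpM2r //.
by rewrite Prob_n0_ge // -div1r ler_pdivlMr // qtail_mul_le1 // ltW.
Qed.

Lemma mean_n0_div_cvg0 a : 0 < a -> a < 1 ->
  (fun N : nat => mean_n0 N (aN a N) / N%:R) @ \oo --> 0.
Proof.
move=> a0 a1; apply/cvgrPdist_le => e e0.
pose e' := Num.min e 1.
have e'0 : 0 < e' by rewrite lt_min e0 ltr01.
have e'_le1 : e' <= 1 by rewrite ge_min lexx orbT.
have e'_le : e' <= e by rewrite ge_min lexx.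
near=> N.
have N2 : (1 < N)%N by near: N; exact: nbhs_infty_gt.
have NqN_ge : 2 / e' * (2 / e' + 1) <= N%:R * expR (- aN a N) ^+ N.
  by near: N; exact: natr_mul_expR_aN_ge.
have N_gt0 : 0 < (N%:R : R) by rewrite ltr0n ltnW.
have b0 := aN_gt0 a0 N2.
have /andP[q0 q1] := expRN_itv b0.
have /andP[qN0 qN1] := expr_q01 q0 (ltW q1) N.
pose k := Num.trunc (e' * N%:R / 2).
have /andP[k_le k_gt] : k%:R <= e' * N%:R / 2 < k.+1%:R.
  by rewrite truncn_itv // divr_ge0 // mulr_ge0 // ltW.
have kN : (k <= N)%N by rewrite -(ler_nat R) (le_trans k_le) //; nra.
rewrite sub0r normrN ger0_norm; last by rewrite divr_ge0 ?mean_n0_ge0.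
apply: le_trans (mean_n0_div_le b0 (ltnW N2) kN) _ => //.
have kqN_ge : 2 / e' <= k%:R * expR (- aN a N) ^+ N.
  set x := expR (- aN a N) ^+ N in qN0 qN1 NqN_ge *.
  have : (e' * N%:R / 2 - 1) * x <= k%:R * x.
    by rewrite ler_wpM2r // lerBlDr natr1 ltW.
  have -> : (e' * N%:R / 2 - 1) * x = e' / 2 * (N%:R * x) - x by ring.
  have : e' / 2 * (2 / e' * (2 / e' + 1)) <= e' / 2 * (N%:R * x).
    by rewrite ler_wpM2l // divr_ge0 // ltW.
  have -> : e' / 2 * (2 / e' * (2 / e' + 1)) = 2 / e' + 1 by field; rewrite gt_eqF.
  lra.
have inv_le : (1 + k%:R * expR (- aN a N) ^+ N)^-1 <= e' / 2.
  have kq_gt0 : 0 < 1 + k%:R * expR (- aN a N) ^+ N by rewrite ltr_wpDr ?mulr_ge0.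
  rewrite -[e' / 2]invf_div lef_pV2 ?posrE ?divr_gt0 //.
  by rewrite (le_trans kqN_ge) // lerDr.
have : k%:R / N%:R <= e' / 2 by rewrite ler_pdivrMr // mulrAC.
lra.
Unshelve. all: by end_near.
Qed.

Lemma Prob_n0_ge_cvg1 {a c} {k : nat -> nat} : 0 < a -> 1 < c ->
  (forall N, (k N <= N)%N) ->
  (\forall N \near \oo, c * N%:R <= a * (N - k N)%N%:R) ->
  (fun N : nat => Prob N (aN a N) [set n | (k N <= n 0%N)%N]) @ \oo --> (1 : R^o).
Proof.
move=> a0 c1 kN ca_le; apply/cvgrPdist_le => e e0; near=> N.
have N2 : (1 < N)%N by near: N; exact: nbhs_infty_gt.
have tail_le : forall j : nat, c * N%:R <= a * j%:R ->
    N%:R * expR (- aN a N) ^+ j <= e.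
  by near: N; exact: natr_mul_expR_aN_le.
have caN : c * N%:R <= a * (N - k N)%N%:R by near: N; exact: ca_le.
have /andP[q0 q1] := expRN_itv (aN_gt0 a0 N2).
have /andP[qNk0 _] := expr_q01 q0 (ltW q1) (N - k N).
have kq_le : (k N)%:R * expR (- aN a N) ^+ (N - k N) <= e.
  by rewrite (le_trans _ (tail_le _ caN)) // ler_wpM2r // ler_nat.
rewrite Prob_n0_ge ?aN_gt0 // ger0_norm ?subr_ge0 ?(qtail_le1 q0 (ltW q1)) //.
have := qtail_ge q0 (ltW q1) (kN N); lra.
Unshelve. all: by end_near.
Qed.

Lemma n0_frac_ge_event (N m : nat) : (0 < N)%N -> (m <= N)%N ->
  [set n : nat -> nat | 1 - m%:R / N%:R <= (n 0%N)%:R / N%:R :> R] =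
  [set n | (N - m <= n 0%N)%N].
Proof.
move=> N0 mN; have N_gt0 : 0 < (N%:R : R) by rewrite ltr0n.
rewrite (_ : 1 - m%:R / N%:R = (N - m)%N%:R / N%:R :> R); last first.
  by rewrite natrB // mulrBl divff // gt_eqF.
by apply/seteqP; split => n /=; rewrite ler_pM2r ?invr_gt0 // ler_nat.
Qed.

Lemma Prob_condensate_cvg1 a (m : nat -> nat) L : 0 < a ->
  (forall N, (m N <= N)%N) ->
  (fun N : nat => 1 - (m N)%:R / N%:R : R) @ \oo --> (L : R^o) ->
  L < 1 - a^-1 ->
  (fun N : nat => Prob N (aN a N)
     [set n | 1 - (m N)%:R / N%:R <= (n 0%N)%:R / N%:R :> R]) @ \oo --> (1 : R^o).
Proof.
move=> a0 mN cvgL La; pose d := (1 - a^-1 - L) / 2.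
have d0 : 0 < d by rewrite divr_gt0 // subr_gt0.
have c1 : 1 < a * (1 - L - d).
  have -> : a * (1 - L - d) = 1 + a * d by rewrite /d; field; rewrite gt_eqF.
  by rewrite ltrDl mulr_gt0.
have ca_le : \forall N \near \oo,
    a * (1 - L - d) * N%:R <= a * (N - (N - m N))%N%:R.
  move/cvgrPdist_le: cvgL => /(_ d d0); apply: filterS2 (nbhs_infty_gt 0) => N N0.
  rewrite ler_norml => /andP[mN_ge _].
  have N_gt0 : 0 < (N%:R : R) by rewrite ltr0n.
  rewrite subKn // -[(m N)%:R](divfK (lt0r_neq0 N_gt0)) mulrA.
  apply: ler_wpM2r; first exact: ltW.
  by apply: ler_wpM2l; [exact: ltW | lra].
have := Prob_n0_ge_cvg1 a0 c1 (fun N => leq_subr (m N) N) ca_le.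
apply: cvg_trans; apply: near_eq_cvg; near=> N.
have N0 : (0 < N)%N by near: N; exact: nbhs_infty_gt.
by rewrite /= n0_frac_ge_event.
Unshelve. all: by end_near.
Qed.

Lemma mean_n0_div_ge a e : 1 < a -> 0 < e ->
  \forall N \near \oo, 1 - a^-1 - e <= mean_n0 N (aN a N) / N%:R.
Proof.
move=> a1 e0; have a0 : 0 < a by apply: lt_trans a1.
have [lim_le0|lim_gt0] := lerP (1 - a^-1 - e) 0.
  near=> N; have N2 : (1 < N)%N by near: N; exact: nbhs_infty_gt.
  by rewrite (le_trans lim_le0) // divr_ge0 ?(mean_n0_ge0 (aN_gt0 a0 N2)).
pose th := 1 - a^-1 - e / 2; pose k N := Num.trunc (th * N%:R).
have th_gt0 : 0 < th by rewrite /th; lra.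
have th_lt1 : th < 1 by rewrite /th; have := divr_gt0 ltr01 a0; lra.
have k_itv N : (k N)%:R <= th * N%:R < (k N).+1%:R.
  by rewrite truncn_itv // mulr_ge0 // ltW.
have kN N : (k N <= N)%N.
  have /andP[k_le _] := k_itv N; rewrite -(ler_nat R) (le_trans k_le) //.
  by rewrite ler_piMl // ltW.
have c1 : 1 < a * (1 - th).
  have -> : a * (1 - th) = 1 + a * (e / 2) by rewrite /th; field; rewrite gt_eqF.
  by rewrite ltrDl mulr_gt0 ?divr_gt0.
have ca_le : \forall N \near \oo, a * (1 - th) * N%:R <= a * (N - k N)%N%:R.
  apply: nearW => N; have /andP[k_le _] := k_itv N.
  rewrite -mulrA; apply: ler_wpM2l; first exact: ltW.
  by rewrite natrB // mulrBl mul1r; lra.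
have /cvgrPdist_le /(_ (e / 4)) := Prob_n0_ge_cvg1 a0 c1 kN ca_le.
move=> /(_ (divr_gt0 e0 _)) P_near; near=> N.
have N2 : (1 < N)%N by near: N; exact: nbhs_infty_gt.
have Ne_ge : 4 <= N%:R * e.
  by rewrite -ler_pdivrMr //; near: N; exact: nbhs_infty_ger.
have /ler_normlP[_ P_ge] :
    `|1 - Prob N (aN a N) [set n | (k N <= n 0%N)%N]| <= e / 4.
  by near: N; exact: P_near.
have N_gt0 : 0 < (N%:R : R) by rewrite ltr0n ltnW.
have /andP[_ k_gt] := k_itv N; rewrite -natr1 in k_gt.
rewrite ler_pdivlMr //; apply: le_trans (mean_n0_ge (aN_gt0 a0 N2) (kN N)).
have : (k N)%:R * (1 - e / 4) <=
    (k N)%:R * Prob N (aN a N) [set n | (k N <= n 0%N)%N].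
  by apply: ler_wpM2l => //; lra.
have : (k N)%:R * e <= N%:R * e by apply: ler_wpM2r; [exact: ltW | rewrite ler_nat].
rewrite /th in k_gt; lra.
Unshelve. all: by end_near.
Qed.

End BoseEinsteinCondensation.

Theorem corollary2 (R : realType) (a : R) (ha : 0 < a) :
  (a < 1 ->
     (fun N : nat => mean_n0 N (aN a N) / N%:R) @ \oo --> 0) /\
  (1 < a ->
     (forall (m : nat -> nat) (L : R),
        (forall N, (m N <= N)%N) ->
        (fun N : nat => 1 - (m N)%:R / N%:R : R) @ \oo --> (L : R^o) ->
        0 < L -> L < 1 - a^-1 ->
        (fun N : nat =>
           Prob N (aN a N)
             [set n | 1 - (m N)%:R / N%:R <= (n 0%N)%:R / N%:R :> R]) @ \oo --> (1 : R^o))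
   /\
     (forall eps : R, 0 < eps ->
        \forall N \near \oo, 1 - a^-1 - eps <= mean_n0 N (aN a N) / N%:R)).
Proof.
split; first exact: mean_n0_div_cvg0.
move=> a_gt1; split; last by move=> eps; exact: mean_n0_div_ge.
by move=> m L mN cvgL _; exact: Prob_condensate_cvg1.
Qed.
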